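(* Let $r,s,t$ be nonzero reals and $\lambda=(\lambda_k)_{k\ge0}$ a strictly increasing sequence of positive reals with $\lambda_k\to\infty$. For $a=(a_n)\in\omega$ and $k<n$ let $$\widehat g_k(n)=\lambda_k\left(\frac{1}{\lambda_k-\lambda_{k-1}}\sum_{j=k}^n d_{jk}a_j-\frac{1}{\lambda_{k+1}-\lambda_k}\sum_{j=k+1}^n d_{j,k+1}a_j\right),$$ and for $1\le q<\infty$ let $f_3^\lambda=\{a\in\omega:\sup_{n}\sum_{k=0}^{n-1}|\widehat g_k(n)|^q<\infty\}$ and $f_4^\lambda=\{a\in\omega:\sup_{n}\left|\frac1r\frac{\lambda_n}{\lambda_n-\lambda_{n-1}}a_n\right|<\infty\}$. Then (i) $\{c_0^\lambda(\widehat B)\}^\gamma=\{c^\lambda(\widehat B)\}^\gamma=\{\ell_\infty^\lambda(\widehat B)\}^\gamma=f_3^\lambda\cap f_4^\lambda$ with $q=1$; (ii) if $1<p<\infty$ and $\frac1p+\frac1q=1$, then $\{\ell_p^\lambda(\widehat B)\}^\gamma=f_3^\lambda\cap f_4^\lambda$.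
   Context: $\omega$: all complex sequences indexed by $\mathbb{N}=\{0,1,\dots\}$. Convention: terms with negative subscript are $0$. $D=(d_{nk})$ is the inverse of the lower triangular matrix $B(r,s,t)$ having $r$ on the diagonal, $s$ on the first subdiagonal, $t$ on the second subdiagonal and zeros elsewhere; explicitly $d_{nk}=\frac1r\sum_{v=0}^{n-k}\rho_1^{\,n-k-v}\rho_2^{\,v}$ ($0\le k\le n$), $d_{nk}=0$ ($k>n$), $\rho_{1,2}=\frac{-s\pm\sqrt{s^2-4tr}}{2r}$. With $\widehat W_n(x)=\frac{1}{\lambda_n}\sum_{k=0}^n(\lambda_k-\lambda_{k-1})(rx_k+sx_{k-1}+tx_{k-2})$, for $\mu\in\{c_0,c,\ell_\infty,\ell_p\}$ set $\mu^\lambda(\widehat B)=\{x\in\omega:(\widehat W_n(x))_n\in\mu\}$. The $\gamma$-dual of a sequence space $X$ is $X^\gamma=\{a\in\omega:\sup_n|\sum_{k=0}^n a_kx_k|<\infty\text{ for all }x\in X\}$. *)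

From Stdlib Require Import Reals.
From Coquelicot Require Import Coquelicot.
Open Scope R_scope.

(* Convention: terms with negative subscript are 0. *)
Definition prev1 {T} (z : T) (u : nat -> T) (k : nat) : T :=
  match k with O => z | S k' => u k' end.
Definition prev2 {T} (z : T) (u : nat -> T) (k : nat) : T :=
  match k with O | S O => z | S (S k') => u k' end.

(* Entries of the inverse D = (d_nk) of the lower triangular band matrix
   B(r,s,t): d_nk = e_{n-k} for k <= n, where e is determined by B D = I:
   r e_0 = 1, r e_1 + s e_0 = 0, r e_m + s e_{m-1} + t e_{m-2} = 0. *)
Fixpoint dseq (r s t : R) (m : nat) : R :=
  match m with
  | O => / r
  | S O => - s / (r * r)
  | S (S m2 as m1) => - (s * dseq r s t m1 + t * dseq r s t m2) / r
  end.

Definition dmat (r s t : R) (n k : nat) : R :=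
  if (k <=? n)%nat then dseq r s t (n - k) else 0.

Definition powp (x p : R) : R :=
  if Req_EM_T x 0 then 0 else Rpower x p.

Definition What (r s t : R) (lam : nat -> R) (x : nat -> C) (n : nat) : C :=
  Cmult (RtoC (/ lam n))
    (sum_n (fun k => Cmult (RtoC (lam k - prev1 0 lam k))
        (Cplus (Cplus (Cmult (RtoC r) (x k)) (Cmult (RtoC s) (prev1 (RtoC 0) x k)))
               (Cmult (RtoC t) (prev2 (RtoC 0) x k)))) n).

Definition c0_lam r s t lam (x : nat -> C) : Prop :=
  filterlim (What r s t lam x) eventually (locally (RtoC 0)).
Definition c_lam r s t lam (x : nat -> C) : Prop :=
  exists l : C, filterlim (What r s t lam x) eventually (locally l).
Definition linf_lam r s t lam (x : nat -> C) : Prop :=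
  exists M : R, forall n, Cmod (What r s t lam x n) <= M.
Definition lp_lam (p : R) r s t lam (x : nat -> C) : Prop :=
  ex_series (fun n => powp (Cmod (What r s t lam x n)) p).

Definition gamma_dual (X : (nat -> C) -> Prop) (a : nat -> C) : Prop :=
  forall x, X x -> exists M : R, forall n,
    Cmod (sum_n (fun k => Cmult (a k) (x k)) n) <= M.

Definition ghat r s t (lam : nat -> R) (a : nat -> C) (k n : nat) : C :=
  Cmult (RtoC (lam k))
   (Cminus
     (Cmult (RtoC (/ (lam k - prev1 0 lam k)))
        (sum_n_m (fun j => Cmult (RtoC (dmat r s t j k)) (a j)) k n))
     (Cmult (RtoC (/ (lam (S k) - lam k)))
        (sum_n_m (fun j => Cmult (RtoC (dmat r s t j (S k))) (a j)) (S k) n))).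

Definition f3 (q : R) r s t lam (a : nat -> C) : Prop :=
  exists M : R, forall n : nat,
    match n with
    | O => 0
    | S n' => sum_n (fun k => powp (Cmod (ghat r s t lam a k n)) q) n'
    end <= M.

Definition f4 r (lam : nat -> R) (a : nat -> C) : Prop :=
  exists M : R, forall n : nat,
    Cmod (Cmult (RtoC (/ r * (lam n / (lam n - prev1 0 lam n)))) (a n)) <= M.

From Stdlib Require Import Reals Lra Lia ClassicalEpsilon Classical FunctionalExtensionality.
From Coquelicot Require Import Coquelicot.
Open Scope R_scope.

(* The map [x |-> What x] is a bijection of sequences: it is [B(r,s,t)] followed by an
   invertible weighted mean, and [D] inverts [B] as convolution with [d_(m,0)].  Expressing
   [x] through [What x] and summing by parts gives
     [sum_(k <= n) a_k x_k = sum_(k <= n) G_nk What_k(x)],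
   where row [n] of the lower triangular matrix [G] holds [ghat_k(n)] for [k < n] and the
   [f4] term at [k = n].  So [a] lies in the gamma-dual of [mu^lam] iff [G] maps [mu] into
   sequences with bounded partial transforms, and that happens iff the rows of [G] are
   bounded in [l^1] (for [c0], [c], [l_oo]) resp. [l^q] (for [l_p]).  Sufficiency is Hölder's
   inequality.  Necessity is a gliding hump: testing unit vectors bounds the columns, and if
   the row norms were unbounded, blocks of sign vectors (resp. Hölder-extremal vectors) of
   decreasing size would glue into a [y] in [mu] with unbounded transform.  Finally the
   [q]-th row norm of [G] is the [f3] sum plus the [q]-th power of the [f4] term. *)

Ltac cfix := change plus with Cplus in *; try change zero with (RtoC 0) in *;
  match goal with |- @eq _ ?a ?b => change (@eq C a b) end.
Ltac cring := cfix; ring.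
Ltac cfield := cfix; field.

Lemma powp_zero p : powp 0 p = 0.
Proof. unfold powp. destruct (Req_EM_T 0 0); [reflexivity | lra]. Qed.

Lemma powp_pos x p : 0 < x -> powp x p = Rpower x p.
Proof. intro Hx. unfold powp. destruct (Req_EM_T x 0); [lra | reflexivity]. Qed.

Lemma Rpower_gt0 x p : 0 < Rpower x p.
Proof. apply exp_pos. Qed.

Lemma powp_ge0 x p : 0 <= powp x p.
Proof. unfold powp. destruct (Req_EM_T x 0); [lra | left; apply Rpower_gt0]. Qed.

Lemma powp_exp1 x : 0 <= x -> powp x 1 = x.
Proof.
  intro Hx. destruct (Req_dec x 0) as [->|]; [apply powp_zero|].
  rewrite powp_pos by lra. apply Rpower_1; lra.
Qed.

Lemma powp_one p : powp 1 p = 1.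
Proof. rewrite powp_pos by lra. unfold Rpower. rewrite ln_1, Rmult_0_r. apply exp_0. Qed.

Lemma powp_le_compat x y p : 0 <= p -> 0 <= x <= y -> powp x p <= powp y p.
Proof.
  intros Hp [Hx Hxy]. destruct (Req_dec x 0) as [->|].
  - rewrite powp_zero. apply powp_ge0.
  - rewrite !powp_pos by lra. apply Rle_Rpower_l; lra.
Qed.

Lemma powp_lt_compat x y p : 0 < p -> 0 <= x < y -> powp x p < powp y p.
Proof.
  intros Hp [Hx Hxy]. rewrite (powp_pos y) by lra. destruct (Req_dec x 0) as [->|].
  - rewrite powp_zero. apply Rpower_gt0.
  - rewrite powp_pos by lra. apply Rlt_Rpower_l; lra.
Qed.

Lemma powp_le1_inv x p : 0 < p -> 0 <= x -> powp x p <= 1 -> x <= 1.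
Proof.
  intros Hp Hx H. apply Rnot_lt_le. intro Hlt.
  pose proof (powp_lt_compat 1 x p Hp ltac:(lra)). rewrite powp_one in *. lra.
Qed.

Lemma powp_ge_base x q : 1 <= q -> 1 <= x -> x <= powp x q.
Proof.
  intros Hq Hx. rewrite powp_pos by lra. rewrite <- (Rpower_1 x) at 1 by lra.
  apply Rle_Rpower; lra.
Qed.

Lemma powp_mult_distr x y p : 0 <= x -> 0 <= y -> powp (x * y) p = powp x p * powp y p.
Proof.
  intros Hx Hy. destruct (Req_dec x 0) as [->|]. { rewrite Rmult_0_l, !powp_zero; ring. }
  destruct (Req_dec y 0) as [->|]. { rewrite Rmult_0_r, !powp_zero; ring. }
  rewrite !powp_pos by nra. symmetry. apply Rpower_mult_distr; lra.
Qed.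

Lemma powp_powp x a b : 0 <= x -> powp (powp x a) b = powp x (a * b).
Proof.
  intros Hx. destruct (Req_dec x 0) as [->|]; [rewrite !powp_zero; reflexivity|].
  rewrite (powp_pos x), powp_pos, powp_pos by (try apply Rpower_gt0; lra). apply Rpower_mult.
Qed.

Lemma powp_plus1 x a : 0 <= x -> x * powp x a = powp x (a + 1).
Proof.
  intros Hx. destruct (Req_dec x 0) as [->|]; [rewrite !powp_zero; ring|].
  rewrite !powp_pos by lra. rewrite Rpower_plus, Rpower_1 by lra. ring.
Qed.

Lemma powp_inv x p : 0 < x -> powp (/ x) p = / powp x p.
Proof.
  intro Hx. rewrite !powp_pos by (try apply Rinv_0_lt_compat; lra). unfold Rpower.
  rewrite ln_Rinv, <- exp_Ropp by lra. f_equal. ring.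
Qed.

Lemma powp_unbounded X e : 0 < e -> exists T0, 0 < T0 /\ forall T, T0 <= T -> X <= powp T e.
Proof.
  intros He. destruct (Rle_dec X 0).
  - exists 1. split; [lra|]. intros T _. pose proof (powp_ge0 T e). lra.
  - exists (Rpower X (/ e)). split; [apply Rpower_gt0|]. intros T HT.
    pose proof (Rpower_gt0 X (/ e)).
    rewrite powp_pos by lra.
    apply Rle_trans with (Rpower (Rpower X (/ e)) e).
    + rewrite Rpower_mult, Rinv_l, Rpower_1 by lra. lra.
    + apply Rle_Rpower_l; lra.
Qed.

Lemma conjugate_exponents p q : 1 < p -> / p + / q = 1 ->
  1 < q /\ (q - 1) * p = q /\ (p - 1) * (q - 1) = 1.
Proof.
  intros Hp H.
  assert (Hq : q = p / (p - 1)).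
  { assert (q <> 0).
    { intros ->. rewrite Rinv_0, Rplus_0_r in H.
      assert (p = 1) by (rewrite <- (Rinv_inv p), H; apply Rinv_1). lra. }
    rewrite <- (Rinv_inv q). replace (/ q) with (1 - / p) by lra. field. lra. }
  subst q. repeat split; [|field; lra|field; lra].
  apply Rmult_lt_reg_r with (p - 1); [lra|]. unfold Rdiv. rewrite Rmult_assoc, Rinv_l by lra. lra.
Qed.

(* Young's inequality, proved by comparing [x] with [z^(p-1)]. *)
Lemma young p q x z : 1 < p -> / p + / q = 1 -> 0 <= x -> 0 <= z ->
  x * z <= powp x q + powp z p.
Proof.
  intros Hp Hpq Hx Hz. destruct (conjugate_exponents p q Hp Hpq) as (Hq & _ & Hpq1).
  pose proof (powp_ge0 x q). pose proof (powp_ge0 z p).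
  destruct (Rle_dec x (powp z (p - 1))).
  - apply Rle_trans with (powp z (p - 1) * z); [apply Rmult_le_compat_r; auto|].
    rewrite Rmult_comm, powp_plus1 by lra. replace (p - 1 + 1) with p by ring. lra.
  - assert (z <= powp x (q - 1)).
    { destruct (Req_dec z 0) as [->|]; [apply powp_ge0|].
      replace z with (powp (powp z (p - 1)) (q - 1)).
      + left. apply powp_lt_compat; [lra|]. split; [apply powp_ge0 | lra].
      + rewrite powp_powp, Hpq1 by lra. apply powp_exp1. lra. }
    apply Rle_trans with (x * powp x (q - 1)); [apply Rmult_le_compat_l; auto|].
    rewrite powp_plus1 by lra. replace (q - 1 + 1) with q by ring. lra.
Qed.

Lemma sum_n_split {G : AbelianMonoid} (f : nat -> G) m n : (m <= n)%nat ->
  sum_n f n = plus (sum_n f m) (sum_n_m f (S m) n).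
Proof. intro H. apply sum_n_m_Chasles; lia. Qed.

Lemma sum_n_le_loc (f g : nat -> R) n : (forall k, (k <= n)%nat -> f k <= g k) ->
  sum_n f n <= sum_n g n.
Proof.
  intro H. induction n; rewrite ?sum_O, ?sum_Sn; [apply H; lia|].
  apply Rplus_le_compat; [apply IHn; intros; apply H|apply H]; lia.
Qed.

Lemma sum_n_m_ge0 (f : nat -> R) m n : (forall k, 0 <= f k) -> 0 <= sum_n_m f m n.
Proof.
  intro H. apply Rle_trans with (sum_n_m (fun _ => 0) m n).
  - rewrite sum_n_m_const. lra.
  - apply sum_n_m_le. exact H.
Qed.

Lemma sum_n_ge0 (f : nat -> R) n : (forall k, 0 <= f k) -> 0 <= sum_n f n.
Proof. apply sum_n_m_ge0. Qed.

Lemma sum_n_m_ge_term (f : nat -> R) m n k : (forall k, 0 <= f k) -> (m <= k <= n)%nat ->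
  f k <= sum_n_m f m n.
Proof.
  intros H Hk.
  assert (Htail : f k <= sum_n_m f k n).
  { rewrite sum_Sn_m by lia. change plus with Rplus. pose proof (sum_n_m_ge0 f (S k) n H). lra. }
  destruct k as [|k]; [replace m with 0%nat by lia; exact Htail|].
  rewrite (sum_n_m_Chasles f m k n) by lia. change plus with Rplus.
  pose proof (sum_n_m_ge0 f m k H). lra.
Qed.

Lemma sum_n_incr (f : nat -> R) m n : (forall k, 0 <= f k) -> (m <= n)%nat ->
  sum_n f m <= sum_n f n.
Proof.
  intros H Hmn. rewrite (sum_n_split f m n Hmn). change plus with Rplus.
  pose proof (sum_n_m_ge0 f (S m) n H). lra.
Qed.

Lemma Cmod_sum_n (f : nat -> C) n : Cmod (sum_n f n) <= sum_n (fun k => Cmod (f k)) n.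
Proof. exact (norm_sum_n_m f 0 n). Qed.

Lemma sum_n_m_RtoC (f : nat -> R) m n : sum_n_m (fun k => RtoC (f k)) m n = RtoC (sum_n_m f m n).
Proof.
  destruct (Compare_dec.le_lt_dec m n) as [Hmn|Hmn].
  2:{ rewrite !sum_n_m_zero by lia. reflexivity. }
  induction Hmn; rewrite ?sum_n_n, ?sum_n_Sm, ?IHHmn by lia; [reflexivity|].
  change (Cplus (RtoC (sum_n_m f m m0)) (RtoC (f (S m0))) = RtoC (sum_n_m f m m0 + f (S m0))).
  rewrite RtoC_plus. reflexivity.
Qed.

Lemma Cmod_minus_le (a b : C) : Cmod b - Cmod a <= Cmod (Cplus a b).
Proof.
  pose proof (Cmod_triangle (Cplus a b) (Copp a)) as H.
  replace (Cplus (Cplus a b) (Copp a)) with b in H by ring.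
  replace (Copp a) with (Cmult (Copp (RtoC 1)) a) in H by ring.
  rewrite Cmod_mult, Cmod_m1 in H. lra.
Qed.
Lemma RtoC_neq0 c : c <> 0 -> RtoC c <> RtoC 0.
Proof. intros Hc E. apply Hc. injection E. auto. Qed.

Definition csgn (z : C) : C := Cmult (Cconj z) (RtoC (/ Cmod z)).

Lemma csgn_mul z : Cmult z (csgn z) = RtoC (Cmod z).
Proof.
  unfold csgn. destruct (Req_dec (Cmod z) 0) as [H|H].
  - apply Cmod_eq_0 in H. subst. rewrite Cmod_0, Cmult_0_l. reflexivity.
  - rewrite Cmult_assoc, <- Cmod2_conj, <- RtoC_mult. f_equal. field. exact H.
Qed.

Lemma Cmod_csgn_le z : Cmod (csgn z) <= 1.
Proof.
  unfold csgn. rewrite Cmod_mult, Cmod_conj, Cmod_R.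
  destruct (Req_dec (Cmod z) 0) as [H|H]; [rewrite H, Rmult_0_l; lra|].
  pose proof (Cmod_ge_0 z).
  rewrite Rabs_pos_eq, Rinv_r by (auto; left; apply Rinv_0_lt_compat; lra). lra.
Qed.

Definition null_seq (y : nat -> C) := filterlim y eventually (locally (RtoC 0)).
Definition conv_seq (y : nat -> C) := exists l, filterlim y eventually (locally l).
Definition bounded_seq (y : nat -> C) := exists M : R, forall n, Cmod (y n) <= M.
Definition lp_seq (p : R) (y : nat -> C) := ex_series (fun n => powp (Cmod (y n)) p).

Definition unit_seq (k j : nat) : C := if (j =? k)%nat then RtoC 1 else RtoC 0.

Definition mxsum (G : nat -> nat -> C) (y : nat -> C) n := sum_n (fun k => Cmult (G n k) (y k)) n.

Definition mx_bounded_on (P : (nat -> C) -> Prop) (G : nat -> nat -> C) :=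
  forall y, P y -> exists M, forall n, Cmod (mxsum G y n) <= M.

Definition row_norm (q : R) (G : nat -> nat -> C) n := sum_n (fun k => powp (Cmod (G n k)) q) n.

Definition row_norms_bounded q G := exists M, forall n, row_norm q G n <= M.

Lemma conv_seq_bounded y : conv_seq y -> bounded_seq y.
Proof. intro H. destruct (filterlim_bounded y H) as [M HM]. exists M. exact HM. Qed.

Lemma mx_bounded_on_sub (P P' : (nat -> C) -> Prop) G :
  (forall y, P y -> P' y) -> mx_bounded_on P' G -> mx_bounded_on P G.
Proof. intros HP H y Hy. apply H, HP, Hy. Qed.

Lemma mxsum_unit_seq G k n : mxsum G (unit_seq k) n = if (k <=? n)%nat then G n k else RtoC 0.
Proof.
  unfold mxsum. generalize (G n). intro g. induction n; rewrite ?sum_O, ?sum_Sn.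
  - unfold unit_seq. destruct k; simpl; cring.
  - rewrite IHn. unfold unit_seq. change plus with Cplus.
    destruct (Nat.leb_spec k n), (Nat.leb_spec k (S n)), (Nat.eqb_spec (S n) k); try lia; subst; cring.
Qed.

Lemma unit_seq_null k : null_seq (unit_seq k).
Proof.
  apply filterlim_ext_loc with (fun _ => RtoC 0); [|apply filterlim_const].
  exists (S k). intros n Hn. unfold unit_seq. destruct (Nat.eqb_spec n k); [lia|reflexivity].
Qed.

Lemma ex_series_of_bounded (f : nat -> R) M : (forall k, 0 <= f k) ->
  (forall n, sum_n f n <= M) -> ex_series f.
Proof.
  intros Hf HM. destruct (ex_finite_lim_seq_incr (sum_n f) M) as [l Hl]; auto.
  - intro n. rewrite sum_Sn. change plus with Rplus. pose proof (Hf (S n)). lra.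
  - exists l. exact Hl.
Qed.

Lemma series_partial_bounded (f : nat -> R) : (forall k, 0 <= f k) -> ex_series f ->
  exists L, forall n, sum_n f n <= L.
Proof.
  intros Hf [l Hl]. exists l. apply is_lim_seq_incr_compare; [exact Hl|].
  intro n. rewrite sum_Sn. change plus with Rplus. pose proof (Hf (S n)). lra.
Qed.

Lemma sum_powp_unit_seq p k n :
  sum_n (fun j => powp (Cmod (unit_seq k j)) p) n = if (k <=? n)%nat then 1 else 0.
Proof.
  unfold unit_seq. induction n; rewrite ?sum_O, ?sum_Sn.
  - destruct k; simpl; rewrite ?Cmod_1, ?Cmod_0, ?powp_one, ?powp_zero; reflexivity.
  - rewrite IHn. change plus with Rplus.
    destruct (Nat.leb_spec k n), (Nat.leb_spec k (S n)), (Nat.eqb_spec (S n) k); try lia;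
      rewrite ?Cmod_1, ?Cmod_0, ?powp_one, ?powp_zero; lra.
Qed.

Lemma unit_seq_lp p k : lp_seq p (unit_seq k).
Proof.
  apply ex_series_of_bounded with 1; [intros; apply powp_ge0|].
  intro n. rewrite sum_powp_unit_seq. destruct (k <=? n)%nat; lra.
Qed.

Lemma column_bounds P G : (forall k, P (unit_seq k)) -> mx_bounded_on P G ->
  exists Cc : nat -> R, forall n k, (k <= n)%nat -> Cmod (G n k) <= Cc k.
Proof.
  intros Hunit HG.
  destruct (choice (fun k M => forall n, Cmod (mxsum G (unit_seq k) n) <= M)) as [Cc HCc].
  { intro k. apply HG, Hunit. }
  exists Cc. intros n k Hk. specialize (HCc k n). rewrite mxsum_unit_seq in HCc.
  apply Nat.leb_le in Hk. rewrite Hk in HCc. exact HCc.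
Qed.

Lemma row_tail_unbounded q G Cc : 0 <= q ->
  (forall n k, (k <= n)%nat -> Cmod (G n k) <= Cc k) -> ~ row_norms_bounded q G ->
  forall m K, exists n, (m < n)%nat /\ K <= sum_n_m (fun k => powp (Cmod (G n k)) q) (S m) n.
Proof.
  intros Hq Hcol Hrows m K.
  set (head := sum_n (fun k => powp (Cc k) q) m).
  assert (Hhead : forall n j, (j <= n)%nat ->
    sum_n (fun k => powp (Cmod (G n k)) q) j <= sum_n (fun k => powp (Cc k) q) j).
  { intros n j Hjn. apply sum_n_le_loc. intros k Hk.
    apply powp_le_compat; [lra|split; [apply Cmod_ge_0|apply Hcol; lia]]. }
  apply NNPP. intro Hno. apply Hrows. exists (head + Rmax K 0). intro n.
  pose proof (Rmax_l K 0). pose proof (Rmax_r K 0).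
  destruct (Compare_dec.le_lt_dec n m) as [Hnm|Hmn].
  - pose proof (Hhead n n (le_n n)).
    pose proof (sum_n_incr (fun k => powp (Cc k) q) n m (fun k => powp_ge0 _ _) Hnm).
    unfold row_norm, head in *. lra.
  - unfold row_norm. rewrite (sum_n_split _ m n) by lia. change plus with Rplus.
    pose proof (Hhead n m ltac:(lia)).
    assert (sum_n_m (fun k => powp (Cmod (G n k)) q) (S m) n <= K).
    { apply Rnot_lt_le. intro HK. apply Hno. exists n. split; [lia|lra]. }
    unfold head in *. lra.
Qed.

Section Blocks.
Variable N : nat -> nat.
Hypothesis HN0 : N 0%nat = 0%nat.
Hypothesis HNS : forall i, (N i < N (S i))%nat.

Lemma blocks_le i j : (i <= j)%nat -> (N i <= N j)%nat.
Proof. induction 1; [lia|pose proof (HNS m); lia]. Qed.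

Lemma blocks_ge_id i : (i <= N i)%nat.
Proof. induction i; [lia|pose proof (HNS i); lia]. Qed.

Lemma block_index_unique i j k : (N i < k <= N (S i))%nat -> (N j < k <= N (S j))%nat -> i = j.
Proof.
  intros Hi Hj. destruct (Nat.lt_trichotomy i j) as [h|[h|h]]; auto.
  - pose proof (blocks_le (S i) j h). lia.
  - pose proof (blocks_le (S j) i h). lia.
Qed.

Lemma block_index_exists k : (0 < k)%nat -> exists i, (N i < k <= N (S i))%nat.
Proof.
  intro Hk. pose proof (blocks_ge_id k).
  assert (Hcover : forall j, (k <= N j)%nat -> exists i, (N i < k <= N (S i))%nat).
  { induction j; intro Hj; [lia|].
    destruct (Compare_dec.le_lt_dec k (N j)); [apply IHj; lia|exists j; lia]. }
  apply Hcover with k. lia.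
Qed.

Lemma glue_blocks (V : nat -> nat -> C) :
  exists y : nat -> C, y 0%nat = RtoC 0 /\ forall i k, (N i < k <= N (S i))%nat -> y k = V i k.
Proof.
  exists (fun k => match k with
           | O => RtoC 0
           | S _ => V (epsilon (inhabits 0%nat) (fun i => (N i < k <= N (S i))%nat)) k
           end).
  split; [reflexivity|]. intros i [|k] Hk; [lia|].
  pose proof (epsilon_spec (inhabits 0%nat) (fun i => (N i < S k <= N (S i))%nat)
                (block_index_exists (S k) ltac:(lia))) as He.
  rewrite (block_index_unique _ _ _ He Hk). reflexivity.
Qed.

Lemma ball_0_of_Cmod (z : C) (eps : posreal) : Cmod z < eps -> ball (RtoC 0) eps z.
Proof.
  intro H. apply (@norm_compat1 C_AbsRing C_NormedModule). change (Cmod (minus z (RtoC 0)) < eps).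
  replace (minus z (RtoC 0)) with z; [exact H|]. unfold minus, plus, opp. simpl. cring.
Qed.

Lemma glued_null_seq (V : nat -> nat -> C) (y : nat -> C) :
  (forall i k, (N i < k <= N (S i))%nat -> y k = V i k) ->
  (forall i k, (N i < k <= N (S i))%nat -> Cmod (V i k) <= / INR (S i)) -> null_seq y.
Proof.
  intros Hy HV. apply filterlim_locally. intro eps.
  destruct (INR_unbounded (/ eps)) as [I HI]. exists (S (N I)). intros k Hk.
  apply ball_0_of_Cmod. destruct (block_index_exists k ltac:(lia)) as [i Hi].
  rewrite (Hy i k Hi).
  assert (HIi : (I <= i)%nat).
  { destruct (Compare_dec.le_lt_dec I i); auto. pose proof (blocks_le (S i) I ltac:(lia)). lia. }
  eapply Rle_lt_trans; [apply HV, Hi|].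
  pose proof (Rinv_0_lt_compat eps (cond_pos eps)). pose proof (le_INR I (S i) ltac:(lia)).
  rewrite <- (Rinv_inv eps). apply Rinv_lt_contravar; [apply Rmult_lt_0_compat|]; lra.
Qed.

Lemma glued_lp_seq p (V : nat -> nat -> C) (y : nat -> C) :
  y 0%nat = RtoC 0 -> (forall i k, (N i < k <= N (S i))%nat -> y k = V i k) ->
  (forall i, sum_n_m (fun k => powp (Cmod (V i k)) p) (S (N i)) (N (S i)) <= (/ 2) ^ i) ->
  lp_seq p y.
Proof.
  intros Hy0 Hy HV. apply ex_series_of_bounded with 2; [intros; apply powp_ge0|].
  assert (Hblocks : forall j, sum_n (fun k => powp (Cmod (y k)) p) (N j) <= 2 - 2 * (/ 2) ^ j).
  { induction j.
    - rewrite HN0, sum_O, Hy0, Cmod_0, powp_zero. simpl. lra.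
    - rewrite (sum_n_split _ (N j) (N (S j))) by (pose proof (HNS j); lia).
      rewrite (sum_n_m_ext_loc _ (fun k => powp (Cmod (V j k)) p))
        by (intros k Hk; rewrite (Hy j k) by lia; reflexivity).
      pose proof (HV j). change plus with Rplus. simpl. lra. }
  intro n. eapply Rle_trans;
    [apply (sum_n_incr _ n (N n)); [intros; apply powp_ge0|apply blocks_ge_id]|].
  eapply Rle_trans; [apply Hblocks|]. pose proof (pow_lt (/ 2) n ltac:(lra)). lra.
Qed.

End Blocks.

Definition hump_block G (Cc : nat -> R) i m n (v : nat -> C) : Prop :=
  (m < n)%nat /\ (forall k, (m < k <= n)%nat -> Cmod (v k) <= 1) /\
  sum_n Cc m + INR i <= Cmod (sum_n_m (fun k => Cmult (G n k) (v k)) (S m) n).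

(* Gliding hump: block [i] is chosen so that the tail sum over it beats, by [i], the
   column bounds on everything glued before it. *)
Lemma gliding_hump G Cc (Q : nat -> nat -> nat -> (nat -> C) -> Prop) :
  (forall n k, (k <= n)%nat -> Cmod (G n k) <= Cc k) ->
  (forall i m, exists n v, hump_block G Cc i m n v /\ Q i m n v) ->
  exists (N : nat -> nat) (V : nat -> nat -> C) (y : nat -> C),
    N 0%nat = 0%nat /\ (forall i, (N i < N (S i))%nat) /\ (forall i, Q i (N i) (N (S i)) (V i)) /\
    y 0%nat = RtoC 0 /\ (forall i k, (N i < k <= N (S i))%nat -> y k = V i k) /\
    (forall M, exists n, M < Cmod (mxsum G y n)).
Proof.
  intros Hcol Hstep.
  destruct (choice (fun (im : nat * nat) (nv : nat * (nat -> C)) =>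
      let (i, m) := im in let (n, v) := nv in hump_block G Cc i m n v /\ Q i m n v))
    as [F HF].
  { intros [i m]. destruct (Hstep i m) as (n & v & H). exists (n, v). exact H. }
  set (N := fix N i := match i with O => O | S i' => fst (F (i', N i')) end).
  set (V := fun i => snd (F (i, N i))).
  assert (HV : forall i, hump_block G Cc i (N i) (N (S i)) (V i) /\ Q i (N i) (N (S i)) (V i)).
  { intro i. specialize (HF (i, N i)). change (N (S i)) with (fst (F (i, N i))). unfold V.
    destruct (F (i, N i)) as [n v]. exact HF. }
  assert (HN0 : N 0%nat = 0%nat) by reflexivity.
  clearbody V N.
  assert (HNS : forall i, (N i < N (S i))%nat) by (intro i; apply HV).
  destruct (glue_blocks N HN0 HNS V) as (y & Hy0 & Hy).
  exists N, V, y. do 5 (split; [auto; intro; apply HV|]).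
  intros M. destruct (INR_unbounded M) as [i Hi]. exists (N (S i)).
  destruct (HV i) as ((_ & _ & Hbig) & _).
  unfold mxsum. rewrite (sum_n_split _ (N i) (N (S i))) by (pose proof (HNS i); lia).
  rewrite (sum_n_m_ext_loc _ (fun k => Cmult (G (N (S i)) k) (V i k)))
    by (intros k Hk; rewrite (Hy i k) by lia; reflexivity).
  assert (Hhead : Cmod (sum_n (fun k => Cmult (G (N (S i)) k) (y k)) (N i)) <= sum_n Cc (N i)).
  { eapply Rle_trans; [apply Cmod_sum_n|]. apply sum_n_le_loc. intros k Hk.
    assert (Hyk : Cmod (y k) <= 1).
    { destruct k as [|k]; [rewrite Hy0, Cmod_0; lra|].
      destruct (block_index_exists N HN0 HNS (S k) ltac:(lia)) as [j Hj].
      rewrite (Hy j _ Hj). apply HV, Hj. }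
    rewrite Cmod_mult. pose proof (Cmod_ge_0 (y k)).
    assert (Cmod (G (N (S i)) k) <= Cc k) by (apply Hcol; pose proof (HNS i); lia).
    pose proof (Cmod_ge_0 (G (N (S i)) k)). nra. }
  pose proof (Cmod_minus_le (sum_n (fun k => Cmult (G (N (S i)) k) (y k)) (N i))
                (sum_n_m (fun k => Cmult (G (N (S i)) k) (V i k)) (S (N i)) (N (S i)))).
  change plus with Cplus. lra.
Qed.

Lemma null_hump_step G Cc :
  (forall m K, exists n, (m < n)%nat /\ K <= sum_n_m (fun k => powp (Cmod (G n k)) 1) (S m) n) ->
  forall i m, exists n v, hump_block G Cc i m n v /\
    forall k, (m < k <= n)%nat -> Cmod (v k) <= / INR (S i).
Proof.
  intros Htail i m.
  assert (Hi : 0 < INR (S i)) by (apply lt_0_INR; lia).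
  assert (Hi1 : / INR (S i) <= 1).
  { rewrite <- Rinv_1. apply Rinv_le_contravar; [lra|]. rewrite S_INR. pose proof (pos_INR i). lra. }
  destruct (Htail m (INR (S i) * (sum_n Cc m + INR i))) as (n & Hmn & HT).
  rewrite sum_n_m_ext_loc with (b := fun k => Cmod (G n k)) in HT
    by (intros; apply powp_exp1, Cmod_ge_0).
  set (v := fun k => Cmult (RtoC (/ INR (S i))) (csgn (G n k))).
  assert (Hv : forall k, Cmod (v k) <= / INR (S i)).
  { intro k. unfold v. rewrite Cmod_mult, Cmod_R, Rabs_pos_eq by (left; apply Rinv_0_lt_compat; lra).
    pose proof (Cmod_csgn_le (G n k)). pose proof (Rinv_0_lt_compat _ Hi). nra. }
  exists n, v. repeat split; auto; [intros k _; eapply Rle_trans; [apply Hv|exact Hi1]|].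
  rewrite (sum_n_m_ext_loc _ (fun k => RtoC (/ INR (S i) * Cmod (G n k))))
    by (intros k _; unfold v; rewrite RtoC_mult, <- csgn_mul; cring).
  rewrite sum_n_m_RtoC, Cmod_R. eapply Rle_trans; [|apply Rle_abs].
  rewrite (sum_n_m_mult_l (K := R_Ring)). change mult with Rmult.
  apply Rmult_le_reg_l with (INR (S i)); [exact Hi|].
  rewrite <- Rmult_assoc, Rinv_r, Rmult_1_l by lra. exact HT.
Qed.

Lemma row_l1_bounded_of_null G : mx_bounded_on null_seq G -> row_norms_bounded 1 G.
Proof.
  intros HG. apply NNPP. intro Hrows.
  destruct (column_bounds null_seq G unit_seq_null HG) as [Cc Hcol].
  pose proof (row_tail_unbounded 1 G Cc ltac:(lra) Hcol Hrows) as Htail.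
  destruct (gliding_hump G Cc (fun i m n v => forall k, (m < k <= n)%nat -> Cmod (v k) <= / INR (S i)))
    as (N & V & y & HN0 & HNS & HQ & Hy0 & Hy & Hunb); auto.
  - exact (null_hump_step G Cc Htail).
  - destruct (HG y (glued_null_seq N HN0 HNS V y Hy HQ)) as [M HM].
    destruct (Hunb M) as [n Hn]. pose proof (HM n). lra.
Qed.

(* The vector attaining equality in Hölder's inequality against [g]. *)
Definition holder_dual (c q : R) (g : C) : C := Cmult (RtoC (c * powp (Cmod g) (q - 1))) (csgn g).

Lemma holder_dual_mul c q g : Cmult g (holder_dual c q g) = RtoC (c * powp (Cmod g) q).
Proof.
  unfold holder_dual. rewrite Cmult_comm, <- Cmult_assoc, (Cmult_comm (csgn g)), csgn_mul, <- RtoC_mult.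
  f_equal. rewrite Rmult_assoc, (Rmult_comm _ (Cmod g)), powp_plus1 by apply Cmod_ge_0.
  f_equal. f_equal. ring.
Qed.

Lemma holder_dual_powp c p q g : 0 <= c -> 0 <= p -> (q - 1) * p = q ->
  powp (Cmod (holder_dual c q g)) p <= powp c p * powp (Cmod g) q.
Proof.
  intros Hc Hp Hqp. unfold holder_dual. rewrite Cmod_mult, Cmod_R.
  assert (Ha : 0 <= c * powp (Cmod g) (q - 1)) by (apply Rmult_le_pos; [lra|apply powp_ge0]).
  pose proof (Cmod_csgn_le g). pose proof (Cmod_ge_0 (csgn g)).
  rewrite Rabs_pos_eq by lra.
  apply Rle_trans with (powp (c * powp (Cmod g) (q - 1)) p).
  - apply powp_le_compat; [lra|]. split; [apply Rmult_le_pos|]; nra.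
  - rewrite powp_mult_distr, powp_powp, Hqp by first [apply Cmod_ge_0 | apply powp_ge0 | lra]. lra.
Qed.

Lemma lp_hump_step p q G Cc : 1 < p -> (q - 1) * p = q ->
  (forall m K, exists n, (m < n)%nat /\ K <= sum_n_m (fun k => powp (Cmod (G n k)) q) (S m) n) ->
  forall i m, exists n v, hump_block G Cc i m n v /\
    sum_n_m (fun k => powp (Cmod (v k)) p) (S m) n <= (/ 2) ^ i.
Proof.
  intros Hp Hqp Htail i m.
  set (B := Rabs (sum_n Cc m) + INR i + 1).
  assert (HB : sum_n Cc m + INR i + 1 <= B /\ 0 < B)
    by (pose proof (Rle_abs (sum_n Cc m)); pose proof (Rabs_pos (sum_n Cc m));
        pose proof (pos_INR i); unfold B; lra).
  assert (HBp : 0 < powp B p) by (rewrite powp_pos by lra; apply Rpower_gt0).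
  assert (H2i : 0 < 2 ^ i) by (apply pow_lt; lra).
  destruct (powp_unbounded (2 ^ i * powp B p) (p - 1)) as (T0 & HT0 & HT0'); [lra|].
  destruct (Htail m T0) as (n & Hmn & HT).
  set (T := sum_n_m (fun k => powp (Cmod (G n k)) q) (S m) n) in HT.
  set (c := B / T).
  assert (Hc : 0 < c) by (apply Rdiv_lt_0_compat; lra).
  set (v := fun k => holder_dual c q (G n k)).
  (* [c^p T = B^p / T^(p-1)], which is small because [T] is large. *)
  assert (Hvp : sum_n_m (fun k => powp (Cmod (v k)) p) (S m) n <= (/ 2) ^ i).
  { eapply Rle_trans; [apply sum_n_m_le; intro k; apply holder_dual_powp; lra|].
    rewrite (sum_n_m_mult_l (K := R_Ring)). change (powp c p * T <= (/ 2) ^ i).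
    unfold c, Rdiv. rewrite powp_mult_distr, powp_inv by (try apply Rlt_le, Rinv_0_lt_compat; lra).
    pose proof (powp_plus1 T (p - 1) ltac:(lra)) as HTp. replace (p - 1 + 1) with p in HTp by ring.
    rewrite <- HTp, pow_inv.
    pose proof (HT0' T HT).
    assert (0 < powp T (p - 1)) by nra.
    apply Rle_trans with (powp B p * / powp T (p - 1)); [right; field; split; lra|].
    apply Rmult_le_reg_l with (2 ^ i * powp T (p - 1)); [nra|].
    replace (2 ^ i * powp T (p - 1) * (/ 2 ^ i)) with (powp T (p - 1)) by (field; lra).
    replace (2 ^ i * powp T (p - 1) * (powp B p * / powp T (p - 1))) with (2 ^ i * powp B p)
      by (field; lra).
    lra. }
  exists n, v. repeat split; auto.
  - intros k Hk. apply (powp_le1_inv _ p); [lra|apply Cmod_ge_0|].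
    eapply Rle_trans;
      [apply (sum_n_m_ge_term (fun k => powp (Cmod (v k)) p) (S m) n k); [intros; apply powp_ge0|lia]|].
    eapply Rle_trans; [exact Hvp|]. rewrite <- (pow1 i). apply pow_incr. lra.
  - rewrite (sum_n_m_ext_loc _ (fun k => RtoC (c * powp (Cmod (G n k)) q)))
      by (intros; apply holder_dual_mul).
    rewrite sum_n_m_RtoC, Cmod_R, (sum_n_m_mult_l (K := R_Ring)).
    change (sum_n Cc m + INR i <= Rabs (c * T)).
    replace (c * T) with B by (unfold c; field; lra). rewrite Rabs_pos_eq; lra.
Qed.

Lemma row_lq_bounded_of_lp p q G : 1 < p -> / p + / q = 1 ->
  mx_bounded_on (lp_seq p) G -> row_norms_bounded q G.
Proof.
  intros Hp Hpq HG. destruct (conjugate_exponents p q Hp Hpq) as (Hq & Hqp & _).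
  apply NNPP. intro Hrows.
  destruct (column_bounds (lp_seq p) G (unit_seq_lp p) HG) as [Cc Hcol].
  pose proof (row_tail_unbounded q G Cc ltac:(lra) Hcol Hrows) as Htail.
  destruct (gliding_hump G Cc
             (fun i m n v => sum_n_m (fun k => powp (Cmod (v k)) p) (S m) n <= (/ 2) ^ i))
    as (N & V & y & HN0 & HNS & HQ & Hy0 & Hy & Hunb); auto.
  - exact (lp_hump_step p q G Cc Hp Hqp Htail).
  - destruct (HG y (glued_lp_seq N HN0 HNS p V y Hy0 Hy HQ)) as [M HM].
    destruct (Hunb M) as [n Hn]. pose proof (HM n). lra.
Qed.

Lemma Cmod_mxsum_le G y n : Cmod (mxsum G y n) <= sum_n (fun k => Cmod (G n k) * Cmod (y k)) n.
Proof.
  eapply Rle_trans; [apply Cmod_sum_n|]. right. apply sum_n_ext. intro. apply Cmod_mult.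
Qed.

Lemma mx_bounded_on_bounded_of_row_l1 G : row_norms_bounded 1 G -> mx_bounded_on bounded_seq G.
Proof.
  intros [M HM] y [My HMy]. exists (M * Rmax My 0). intro n.
  eapply Rle_trans; [apply Cmod_mxsum_le|].
  apply Rle_trans with (sum_n (fun k => Cmod (G n k) * Rmax My 0) n).
  - apply sum_n_le_loc. intros k _. apply Rmult_le_compat_l; [apply Cmod_ge_0|].
    eapply Rle_trans; [apply HMy|apply Rmax_l].
  - unfold sum_n. rewrite (sum_n_m_mult_r (K := R_Ring)). apply Rmult_le_compat_r; [apply Rmax_r|].
    specialize (HM n). unfold row_norm in HM.
    rewrite (sum_n_ext _ (fun k => Cmod (G n k))) in HM by (intro; apply powp_exp1, Cmod_ge_0).
    exact HM.
Qed.

Lemma mx_bounded_on_lp_of_row_lq p q G : 1 < p -> / p + / q = 1 ->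
  row_norms_bounded q G -> mx_bounded_on (lp_seq p) G.
Proof.
  intros Hp Hpq [M HM] y Hy.
  destruct (series_partial_bounded _ (fun k => powp_ge0 _ _) Hy) as [L HL].
  exists (M + L). intro n. eapply Rle_trans; [apply Cmod_mxsum_le|].
  apply Rle_trans with (sum_n (fun k => plus (powp (Cmod (G n k)) q) (powp (Cmod (y k)) p)) n).
  - apply sum_n_le_loc. intros k _. apply young; auto; apply Cmod_ge_0.
  - rewrite sum_n_plus. pose proof (HM n). pose proof (HL n). unfold row_norm in *.
    change plus with Rplus. lra.
Qed.
Definition conv (f u : nat -> C) (m : nat) : C := sum_n (fun k => Cmult (f (m - k)%nat) (u k)) m.

Lemma prev2_prev1 {T} (z : T) (u : nat -> T) : prev2 z u = prev1 z (prev1 z u).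
Proof. apply functional_extensionality. intros [|[|k]]; reflexivity. Qed.

Lemma conv_prev1 f u : prev1 (RtoC 0) (conv f u) = conv (prev1 (RtoC 0) f) u.
Proof.
  apply functional_extensionality. intros [|m]; cbn [prev1]; unfold conv.
  - rewrite sum_O. change (prev1 (RtoC 0) f (0 - 0)) with (RtoC 0). cring.
  - rewrite sum_Sn, Nat.sub_diag. change (prev1 (RtoC 0) f 0) with (RtoC 0).
    rewrite Cmult_0_l. cfix. rewrite Cplus_0_r. apply sum_n_ext_loc. intros k Hk.
    replace (S m - k)%nat with (S (m - k)) by lia. reflexivity.
Qed.

Lemma conv_prev2 f u : prev2 (RtoC 0) (conv f u) = conv (prev2 (RtoC 0) f) u.
Proof. rewrite !prev2_prev1, !conv_prev1. reflexivity. Qed.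

Lemma sum_n_lin3 (a b c : C) (F G H : nat -> C) n :
  sum_n (fun k => Cplus (Cplus (Cmult a (F k)) (Cmult b (G k))) (Cmult c (H k))) n
  = Cplus (Cplus (Cmult a (sum_n F n)) (Cmult b (sum_n G n))) (Cmult c (sum_n H n)).
Proof. induction n; rewrite ?sum_O, ?sum_Sn; [|rewrite IHn]; cring. Qed.

Lemma conv_lin3 (a b c : C) f g h u m :
  conv (fun j => Cplus (Cplus (Cmult a (f j)) (Cmult b (g j))) (Cmult c (h j))) u m
  = Cplus (Cplus (Cmult a (conv f u m)) (Cmult b (conv g u m))) (Cmult c (conv h u m)).
Proof.
  unfold conv. rewrite <- sum_n_lin3. apply sum_n_ext. intro k. cring.
Qed.

Lemma conv_unit0 u m : conv (unit_seq 0) u m = u m.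
Proof.
  transitivity (mxsum (fun _ => u) (unit_seq m) m).
  - unfold conv, mxsum. apply sum_n_ext_loc. intros k Hk. rewrite Cmult_comm. f_equal.
    unfold unit_seq. destruct (Nat.eqb_spec (m - k) 0), (Nat.eqb_spec k m); reflexivity || lia.
  - rewrite mxsum_unit_seq, Nat.leb_refl. reflexivity.
Qed.

Section Band.
Variables (r s t : R).
Hypothesis hr : r <> 0.

Definition bmul (x : nat -> C) (k : nat) : C :=
  Cplus (Cplus (Cmult (RtoC r) (x k)) (Cmult (RtoC s) (prev1 (RtoC 0) x k)))
        (Cmult (RtoC t) (prev2 (RtoC 0) x k)).

Definition dcoef (j : nat) : C := RtoC (dseq r s t j).

Lemma bmul_conv f u m : bmul (conv f u) m = conv (bmul f) u m.
Proof. unfold bmul. rewrite conv_prev1, conv_prev2, conv_lin3. reflexivity. Qed.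

Lemma bmul_dcoef : bmul dcoef = unit_seq 0.
Proof.
  apply functional_extensionality. intro j. unfold bmul, dcoef, unit_seq.
  destruct j as [|[|j]]; cbn [prev1 prev2 Nat.eqb].
  - transitivity (RtoC (r * dseq r s t 0)); [rewrite RtoC_mult; cring|].
    f_equal. simpl. field. exact hr.
  - transitivity (RtoC (r * dseq r s t 1 + s * dseq r s t 0)); [rewrite RtoC_plus, !RtoC_mult; cring|].
    f_equal. simpl. field. exact hr.
  - rewrite <- !RtoC_mult, <- !RtoC_plus. f_equal.
    change (dseq r s t (S (S j))) with (- (s * dseq r s t (S j) + t * dseq r s t j) / r).
    field. exact hr.
Qed.

Lemma bmul_conv_dcoef u m : bmul (conv dcoef u) m = u m.
Proof. rewrite bmul_conv, bmul_dcoef. apply conv_unit0. Qed.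

Lemma bmul_inj x y : (forall m, bmul x m = bmul y m) -> forall m, x m = y m.
Proof.
  intros H m. induction m as [m IH] using Wf_nat.lt_wf_ind.
  assert (H1 : prev1 (RtoC 0) x m = prev1 (RtoC 0) y m).
  { destruct m; [reflexivity|]. apply IH. lia. }
  assert (H2 : prev2 (RtoC 0) x m = prev2 (RtoC 0) y m).
  { destruct m as [|[|m]]; [reflexivity|reflexivity|]. apply IH. lia. }
  specialize (H m). unfold bmul in H. rewrite H1, H2 in H.
  set (P := Cplus (Cmult (RtoC s) (prev1 (RtoC 0) y m)) (Cmult (RtoC t) (prev2 (RtoC 0) y m))) in *.
  assert (Hr : RtoC r <> RtoC 0) by (apply RtoC_neq0, hr).
  transitivity (Cmult (Cinv (RtoC r)) (Cminus (Cplus (Cplus (Cmult (RtoC r) (x m))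
    (Cmult (RtoC s) (prev1 (RtoC 0) y m))) (Cmult (RtoC t) (prev2 (RtoC 0) y m))) P)).
  - unfold P. cfield. exact Hr.
  - rewrite H. unfold P. cfield. exact Hr.
Qed.

Lemma conv_dcoef_bmul x m : conv dcoef (bmul x) m = x m.
Proof. apply bmul_inj. intro k. apply bmul_conv_dcoef. Qed.

End Band.

Lemma abel_summation (g F : nat -> C) n :
  Cplus (sum_n (fun k => Cmult (Cminus (g k) (g (S k))) (F k)) n) (Cmult (g (S n)) (F n))
  = sum_n (fun k => Cmult (g k) (Cminus (F k) (prev1 (RtoC 0) F k))) n.
Proof.
  induction n; rewrite !sum_O || rewrite !sum_Sn, <- IHn; cbn [prev1]; cring.
Qed.

Lemma sum_n_telescope (f : nat -> C) n :
  sum_n (fun k => Cminus (f k) (prev1 (RtoC 0) f k)) n = f n.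
Proof. induction n; rewrite ?sum_O, ?sum_Sn; [|rewrite IHn]; cbn [prev1]; cring. Qed.

Lemma sum_n_add_mul (f g : nat -> C) (c : C) n :
  sum_n (fun k => Cplus (f k) (Cmult c (g k))) n = Cplus (sum_n f n) (Cmult c (sum_n g n)).
Proof. induction n; rewrite ?sum_O, ?sum_Sn; [|rewrite IHn]; cring. Qed.

Section Transform.
Variables (r s t : R) (lam : nat -> R).
Hypothesis hr : r <> 0.
Hypothesis hlam : forall k, lam k <> 0.
Hypothesis hdlam : forall k, lam k - prev1 0 lam k <> 0.

Definition dlam k := lam k - prev1 0 lam k.

Definition dtail (a : nat -> C) n k := sum_n_m (fun j => Cmult (RtoC (dmat r s t j k)) (a j)) k n.

Definition gmat (a : nat -> C) n k : C :=
  if (k <? n)%nat then ghat r s t lam a k n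
  else if (k =? n)%nat then Cmult (RtoC (/ r * (lam n / (lam n - prev1 0 lam n)))) (a n)
  else RtoC 0.

Lemma dmat_bmul (x : nat -> C) m :
  x m = sum_n (fun k => Cmult (RtoC (dmat r s t m k)) (bmul r s t x k)) m.
Proof.
  rewrite <- (conv_dcoef_bmul r s t hr x m). apply sum_n_ext_loc. intros k Hk.
  unfold dmat, dcoef. apply Nat.leb_le in Hk. rewrite Hk. reflexivity.
Qed.

Lemma lam_What x n :
  Cmult (RtoC (lam n)) (What r s t lam x n) = sum_n (fun k => Cmult (RtoC (dlam k)) (bmul r s t x k)) n.
Proof.
  unfold What, dlam, bmul. rewrite RtoC_inv by apply hlam. cfield. apply RtoC_neq0, hlam.
Qed.

Lemma sum_mul_eq_dtail (a x : nat -> C) n :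
  sum_n (fun m => Cmult (a m) (x m)) n = sum_n (fun k => Cmult (dtail a n k) (bmul r s t x k)) n.
Proof.
  induction n.
  - rewrite !sum_O. unfold dtail. rewrite sum_n_n, (dmat_bmul x 0), sum_O. cring.
  - rewrite sum_Sn, IHn, (sum_Sn (fun k => Cmult (dtail a (S n) k) (bmul r s t x k))).
    rewrite (sum_n_ext_loc (fun k => Cmult (dtail a (S n) k) (bmul r s t x k))
      (fun k => Cplus (Cmult (dtail a n k) (bmul r s t x k))
                      (Cmult (a (S n)) (Cmult (RtoC (dmat r s t (S n) k)) (bmul r s t x k)))))
      by (intros k Hk; unfold dtail; rewrite sum_n_Sm by lia; cring).
    rewrite sum_n_add_mul, (dmat_bmul x (S n)), sum_Sn. unfold dtail. rewrite sum_n_n. cring.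
Qed.

Lemma sum_mul_eq_mxsum (a x : nat -> C) n :
  sum_n (fun m => Cmult (a m) (x m)) n = mxsum (gmat a) (What r s t lam x) n.
Proof.
  rewrite sum_mul_eq_dtail.
  set (g := fun k => Cmult (RtoC (/ dlam k)) (dtail a n k)).
  set (F := fun k => Cmult (RtoC (lam k)) (What r s t lam x k)).
  assert (HF : forall k, Cminus (F k) (prev1 (RtoC 0) F k) = Cmult (RtoC (dlam k)) (bmul r s t x k)).
  { intros [|k]; cbn [prev1]; unfold F; rewrite !lam_What; [rewrite sum_O|rewrite sum_Sn]; cring. }
  assert (Hg : g (S n) = RtoC 0) by (unfold g, dtail; rewrite sum_n_m_zero by lia; cring).
  transitivity (sum_n (fun k => Cmult (g k) (Cminus (F k) (prev1 (RtoC 0) F k))) n).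
  { apply sum_n_ext. intro k. rewrite HF. unfold g.
    transitivity (Cmult (Cmult (RtoC (/ dlam k)) (RtoC (dlam k)))
                        (Cmult (dtail a n k) (bmul r s t x k)));
      [|cring].
    rewrite <- RtoC_mult, Rinv_l by apply hdlam. cring. }
  rewrite <- abel_summation, Hg, Cmult_0_l. cfix. rewrite Cplus_0_r.
  apply sum_n_ext_loc. intros k Hk. unfold gmat, F.
  destruct (Nat.ltb_spec k n).
  - unfold ghat, g, dtail, dlam. change (prev1 0 lam (S k)) with (lam k). cring.
  - replace k with n by lia. rewrite Nat.eqb_refl, Hg.
    unfold g, dtail. rewrite sum_n_n. unfold dmat. rewrite Nat.leb_refl, Nat.sub_diag.
    change (dseq r s t 0) with (/ r).
    replace (/ r * (lam n / (lam n - prev1 0 lam n))) with (/ dlam n * / r * lam n)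
      by (unfold dlam; field; split; [apply hdlam|exact hr]).
    rewrite !RtoC_mult. cring.
Qed.

Lemma What_surj (y : nat -> C) : exists x, What r s t lam x = y.
Proof.
  set (ly := fun j => Cmult (RtoC (lam j)) (y j)).
  set (x := conv (dcoef r s t) (fun k => Cmult (RtoC (/ dlam k)) (Cminus (ly k) (prev1 (RtoC 0) ly k)))).
  exists x. apply functional_extensionality. intro n.
  assert (Hl : RtoC (lam n) <> RtoC 0) by apply RtoC_neq0, hlam.
  transitivity (Cmult (Cinv (RtoC (lam n))) (Cmult (RtoC (lam n)) (What r s t lam x n)));
    [cfield; exact Hl|].
  rewrite lam_What, (sum_n_ext _ (fun k => Cminus (ly k) (prev1 (RtoC 0) ly k))).
  2:{ intro k. unfold x. rewrite bmul_conv_dcoef by exact hr.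
      rewrite Cmult_assoc, <- RtoC_mult, Rinv_r by apply hdlam.
      cring. }
  rewrite sum_n_telescope. unfold ly. cfield. exact Hl.
Qed.

End Transform.

Lemma gamma_dual_iff_mx_bounded_on r s t lam (hr : r <> 0) (hlam : forall k, lam k <> 0)
  (hdlam : forall k, lam k - prev1 0 lam k <> 0) (P : (nat -> C) -> Prop) a :
  gamma_dual (fun x => P (What r s t lam x)) a <-> mx_bounded_on P (gmat r s t lam a).
Proof.
  split.
  - intros Hg y Py. destruct (What_surj r s t lam hr hlam hdlam y) as [x <-].
    destruct (Hg x Py) as [M HM]. exists M. intro n.
    rewrite <- (sum_mul_eq_mxsum r s t lam hr hlam hdlam). apply HM.
  - intros HG x Px. destruct (HG _ Px) as [M HM]. exists M. intro n.
    rewrite (sum_mul_eq_mxsum r s t lam hr hlam hdlam). apply HM.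
Qed.


Lemma row_norm_gmat r s t lam a q n :
  row_norm q (gmat r s t lam a) n =
  match n with O => 0 | S n' => sum_n (fun k => powp (Cmod (ghat r s t lam a k n)) q) n' end +
  powp (Cmod (Cmult (RtoC (/ r * (lam n / (lam n - prev1 0 lam n)))) (a n))) q.
Proof.
  unfold row_norm, gmat. destruct n as [|n].
  - rewrite sum_O. simpl. ring.
  - rewrite sum_Sn, Nat.ltb_irrefl, Nat.eqb_refl. change plus with Rplus. f_equal.
    apply sum_n_ext_loc. intros k Hk.
    replace (k <? S n)%nat with true by (symmetry; apply Nat.ltb_lt; lia).
    reflexivity.
Qed.

Lemma f3_f4_iff_row_norms_bounded r s t lam a q : 1 <= q ->
  f3 q r s t lam a /\ f4 r lam a <-> row_norms_bounded q (gmat r s t lam a).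
Proof.
  intros Hq. split.
  - intros [[M3 H3] [M4 H4]]. exists (M3 + powp (Rmax M4 0) q). intro n. rewrite row_norm_gmat.
    apply Rplus_le_compat; [apply H3|].
    apply powp_le_compat; [lra|]. split; [apply Cmod_ge_0|]. eapply Rle_trans; [apply H4|apply Rmax_l].
  - intros [M HM].
    assert (Hf3 : forall n, 0 <= match n with O => 0
        | S n' => sum_n (fun k => powp (Cmod (ghat r s t lam a k n)) q) n' end).
    { intros [|n]; [lra|]. apply sum_n_ge0. intros; apply powp_ge0. }
    split.
    + exists M. intro n. specialize (HM n). rewrite row_norm_gmat in HM.
      pose proof (powp_ge0 (Cmod (Cmult (RtoC (/ r * (lam n / (lam n - prev1 0 lam n)))) (a n))) q). lra.
    + exists (Rmax 1 M). intro n. specialize (HM n). rewrite row_norm_gmat in HM.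
      set (h := Cmod _) in HM |- *. pose proof (Hf3 n).
      destruct (Rle_dec h 1); [eapply Rle_trans; [eassumption|apply Rmax_l]|].
      pose proof (powp_ge_base h q Hq ltac:(lra)). pose proof (Rmax_r 1 M). lra.
Qed.

Theorem theorem10 (r s t : R) (lam : nat -> R)
  (hr : r <> 0) (hs : s <> 0) (ht : t <> 0)
  (hpos : forall k, 0 < lam k)
  (hinc : forall k, lam k < lam (S k))
  (hinf : is_lim_seq lam p_infty) :
  (forall a : nat -> C,
     (gamma_dual (c0_lam r s t lam) a <-> f3 1 r s t lam a /\ f4 r lam a) /\
     (gamma_dual (c_lam r s t lam) a <-> f3 1 r s t lam a /\ f4 r lam a) /\
     (gamma_dual (linf_lam r s t lam) a <-> f3 1 r s t lam a /\ f4 r lam a)) /\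
  (forall p q : R, 1 < p -> / p + / q = 1 ->
     forall a : nat -> C,
       gamma_dual (lp_lam p r s t lam) a <-> f3 q r s t lam a /\ f4 r lam a).
Proof.
  assert (hlam : forall k, lam k <> 0) by (intro k; pose proof (hpos k); lra).
  assert (hdlam : forall k, lam k - prev1 0 lam k <> 0)
    by (intros [|k]; cbn [prev1]; [pose proof (hpos 0%nat)|pose proof (hinc k)]; lra).
  pose proof (gamma_dual_iff_mx_bounded_on r s t lam hr hlam hdlam) as Hdual.
  split.
  - intro a. rewrite (f3_f4_iff_row_norms_bounded r s t lam a 1) by lra.
    change (c0_lam r s t lam) with (fun x => null_seq (What r s t lam x)).
    change (c_lam r s t lam) with (fun x => conv_seq (What r s t lam x)).
    change (linf_lam r s t lam) with (fun x => bounded_seq (What r s t lam x)).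
    rewrite !Hdual.
    set (G := gmat r s t lam a).
    pose proof (mx_bounded_on_bounded_of_row_l1 G).
    pose proof (mx_bounded_on_sub conv_seq bounded_seq G conv_seq_bounded).
    pose proof (mx_bounded_on_sub null_seq conv_seq G (fun y Hy => ex_intro _ (RtoC 0) Hy)).
    pose proof (row_l1_bounded_of_null G).
    tauto.
  - intros p q Hp Hpq a. destruct (conjugate_exponents p q Hp Hpq) as (Hq & _).
    rewrite (f3_f4_iff_row_norms_bounded r s t lam a q) by lra.
    change (lp_lam p r s t lam) with (fun x => lp_seq p (What r s t lam x)).
    rewrite Hdual.
    split; [apply row_lq_bounded_of_lp | apply mx_bounded_on_lp_of_row_lq]; assumption.
Qed.
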